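(* Let $F$ be any field, $N\in\mathbb{N}$, and $p,p'\in\mathbb{N}$ with $p+p'\le N+1$. If $x\in F^{N+1}$ satisfies $\operatorname{rank}(H_{p,p'-1}(x))\le p$ and $\operatorname{rank}(H_{p-1,p'}(x))\le p'$, then $\operatorname{rank}(H_{p,p'-1}(x))=\operatorname{rank}(H_{p-1,p'}(x))$.
   Context: $\mathbb{N}=\{0,1,2,\ldots\}$. For $N\in\mathbb{N}$, $x=(x_0,\ldots,x_N)\in F^{N+1}$ and integers $s,t\ge -1$ with $s+t\le N$, the Hankel matrix $H_{s,t}(x)$ is the $(s+1)\times(t+1)$ matrix $(x_{i+j})_{0\le i\le s,\,0\le j\le t}$ (a matrix with zero rows or columns has rank $0$). *)

From mathcomp Require Import all_boot all_order all_algebra.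
Set Implicit Arguments. Unset Strict Implicit. Unset Printing Implicit Defensive.
Import GRing.Theory.
Local Open Scope ring_scope.

(* Hankel matrix with r = s+1 rows and c = t+1 columns built from
   x = (x_0, ..., x_N) : 'rV[F]_(N.+1), entry (i,j) = x_(i+j).
   The index i+j is only meaningful when r + c <= N + 2 (i.e. s + t <= N),
   which is always the case where it is used; out-of-range indices are
   sent via inord (never occurs under the hypotheses). *)
Definition hankel (F : fieldType) (N r c : nat) (x : 'rV[F]_(N.+1)) : 'M[F]_(r, c) :=
  \matrix_(i < r, j < c) x 0 (inord (i + j)).

From mathcomp Require Import all_boot all_order all_algebra.
From mathcomp Require Import zify.
Set Implicit Arguments. Unset Strict Implicit. Unset Printing Implicit Defensive.
Import GRing.Theory.

(* Write A = H_{p,p'-1}(x) (p+1 rows, p' columns), B = H_{p-1,p'}(x)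
   (p rows, p'+1 columns) and C = H_{p-1,p'-1}(x), the common part of A and B
   (A is C plus one row, B is C plus one column).

   - a general fact on matrices A with n+1 rows: if the rows are produced by
     a fixed matrix K as a shift (row (i+1) = row i * K for i < n) and are
     linearly dependent, then the last row depends on the first n rows, so A
     and its first n rows have the same rank (the span of the rows preceding
     the top row of a dependence relation is K-invariant);
   - for Hankel matrices, rank B = rank C means the last column of B is a
     combination of the columns of C, i.e. x satisfies a linear recurrence,
     whose companion matrix shifts the rows of A.
   Hence rank A <= p and rank B = rank C give rank A = rank C, and by
   transposition rank B <= p' and rank A = rank C give rank B = rank C.  As
   rank A and rank B both lie in {rank C, rank C + 1}, they are equal. *)

Local Open Scope ring_scope.

Section ShiftedRows.
Variables (F : fieldType) (n c : nat).
Implicit Type A : 'M[F]_(n.+1, c).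

Definition lead_rows A : 'M[F]_(n, c) :=
  \matrix_(i, j) A (widen_ord (leqnSn n) i) j.

Lemma row_lead_rows A (i : 'I_n) :
  row i (lead_rows A) = row (widen_ord (leqnSn n) i) A.
Proof. by apply/rowP => j; rewrite !mxE. Qed.

Lemma lead_rows_sub A : (lead_rows A <= A)%MS.
Proof. by apply/row_subP => i; rewrite row_lead_rows row_sub. Qed.

Lemma rank_lead_rows A : (\rank A <= \rank (lead_rows A) + 1)%N.
Proof.
have A_sub : (A <= lead_rows A + row ord_max A)%MS.
  apply/row_subP => i; have [i_lt | i_ge] := ltnP i n.
    apply: submx_trans (addsmxSl _ _).
    rewrite (_ : row i A = row (Ordinal i_lt) (lead_rows A)) ?row_sub //.
    by rewrite row_lead_rows; congr row; apply: val_inj.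
  have -> : i = ord_max by apply/val_inj => /=; move: (ltn_ord i); lia.
  exact: addsmxSr.
apply: leq_trans (mxrankS A_sub) _.
have [rk_adds _] := mxrank_adds_leqif (lead_rows A) (row ord_max A).
by apply: leq_trans rk_adds _; rewrite leq_add2l rank_leq_row.
Qed.

Lemma last_row_sub_lead A :
  \rank A = \rank (lead_rows A) -> (row ord_max A <= lead_rows A)%MS.
Proof.
move=> rkA; have [_ eq_rk] := mxrank_leqif_sup (lead_rows_sub A).
have A_sub : (A <= lead_rows A)%MS by rewrite -eq_rk rkA.
exact: submx_trans (row_sub _ _) A_sub.
Qed.

Definition rows_below A (m : nat) : 'M[F]_(n.+1, c) :=
  \matrix_(i, j) (if (i < m)%N then A i j else 0).

Lemma row_rows_below A m i :
  row i (rows_below A m) = if (i < m)%N then row i A else 0.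
Proof. by apply/rowP => j; rewrite !mxE; case: ifP; rewrite ?mxE. Qed.

Lemma rows_below_sub_lead A (m : 'I_n.+1) : (rows_below A m <= lead_rows A)%MS.
Proof.
apply/row_subP => i; rewrite row_rows_below; case: ifP => [i_lt_m|_].
  have i_lt : (i < n)%N by move: (ltn_ord m); lia.
  rewrite (_ : row i A = row (Ordinal i_lt) (lead_rows A)) ?row_sub //.
  by rewrite row_lead_rows; congr row; apply: val_inj.
exact: sub0mx.
Qed.

(* Linearly dependent rows: the top row m of a nontrivial dependence
   relation lies in the span of the rows below it. *)
Lemma dependent_row A :
  (\rank A <= n)%N -> exists m : 'I_n.+1, (row m A <= rows_below A m)%MS.
Proof.
move=> rkA.
have [a a_ker a_neq0] : exists2 a : 'rV[F]_n.+1, (a <= kermx A)%MS & a != 0.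
  apply/rowV0Pn; rewrite kermx_eq0 /row_free.
  by apply: contraTN rkA => /eqP ->; rewrite ltnn.
have aA0 : a *m A = 0 by apply/sub_kermxP.
have /existsP [i0 ai0] : [exists i, a 0 i != 0].
  apply: contraR a_neq0 => /existsPn a0; apply/eqP/rowP => i.
  by rewrite mxE; apply/eqP/negPn/a0.
have [m am0 m_max] := @arg_maxnP _ i0 (fun i => a 0 i != 0) (fun i : 'I_n.+1 => val i) ai0.
exists m.
have a_split : a *m A = a *m rows_below A m + a 0 m *: row m A.
  rewrite !mulmx_sum_row (bigD1 m) //= [X in _ = X + _](bigD1 m) //=.
  rewrite row_rows_below ltnn scaler0 add0r addrC; congr (_ + _).
  apply: eq_bigr => i i_neq_m; rewrite row_rows_below.
  case: ifP => // i_ge_m; have /eqP -> : a 0 i == 0; last by rewrite !scale0r.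
  apply: contraFT i_ge_m => /m_max /= i_le_m.
  by move: i_neq_m; rewrite -(inj_eq val_inj) /=; lia.
have -> : row m A = (a 0 m)^-1 *: ((- a) *m rows_below A m).
  apply: (scalerI am0); rewrite scalerA mulfV // scale1r mulNmx.
  by apply/eqP; rewrite -addr_eq0 addrC -a_split aA0.
by rewrite scalemx_sub // submxMl.
Qed.

Section Shift.
Variables (A : 'M[F]_(n.+1, c)) (K : 'M[F]_c).
Hypothesis shiftK : forall i : 'I_n.+1, (i < n)%N -> row i A *m K = row (inord i.+1) A.

Lemma rows_below_shift_stable (m : 'I_n.+1) :
  (row m A <= rows_below A m)%MS -> (rows_below A m *m K <= rows_below A m)%MS.
Proof.
move=> row_m; apply/row_subP => i; rewrite row_mul row_rows_below.
case: ifP => [i_lt_m|_]; last by rewrite mul0mx sub0mx.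
rewrite shiftK; last by move: (ltn_ord m); lia.
have [i1_lt_m | i1_ge_m] := ltnP i.+1 m.
  have i1_lt : (i.+1 < n.+1)%N by move: (ltn_ord m); lia.
  by have := row_sub (inord i.+1) (rows_below A m); rewrite row_rows_below inordK // i1_lt_m.
have m_lt := ltn_ord m.
by rewrite (_ : inord i.+1 = m) //; apply/val_inj; rewrite /= inordK; lia.
Qed.

(* Hence every row from m on, obtained by iterating the shift, lies in
   the span of the rows below m. *)
Lemma shift_sub_rows_below (m : 'I_n.+1) :
  (row m A <= rows_below A m)%MS -> (A <= rows_below A m)%MS.
Proof.
move=> row_m; have stable := rows_below_shift_stable row_m.
have rows_from_m k : (m + k < n.+1)%N -> (row (inord (m + k)) A <= rows_below A m)%MS.
  elim: k => [|k IHk] mk_lt; first by rewrite addn0 inord_val.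
  have mk_lt' : (m + k < n.+1)%N by lia.
  rewrite addnS -[(m + k)%N](@inordK n) // -shiftK; last by rewrite inordK; lia.
  exact: submx_trans (submxMr _ (IHk mk_lt')) stable.
apply/row_subP => i; have [i_lt_m | i_ge_m] := ltnP i m.
  by have := row_sub i (rows_below A m); rewrite row_rows_below i_lt_m.
by rewrite -(inord_val i) -(subnKC i_ge_m); apply: rows_from_m; rewrite subnKC.
Qed.

Lemma shift_rank_lead : (\rank A <= n)%N -> \rank A = \rank (lead_rows A).
Proof.
move=> /dependent_row [m row_m].
have A_sub := submx_trans (shift_sub_rows_below row_m) (rows_below_sub_lead A m).
by apply/eqP; rewrite eqn_leq !mxrankS // lead_rows_sub.
Qed.

End Shift.
End ShiftedRows.

Section Hankel.
Variables (F : fieldType) (N : nat) (x : 'rV[F]_(N.+1)).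

Lemma hankel_tr r c : (hankel r c x)^T = hankel c r x.
Proof. by apply/matrixP => i j; rewrite !mxE addnC. Qed.

Lemma rank_hankel_tr r c : \rank (hankel r c x) = \rank (hankel c r x).
Proof. by rewrite -mxrank_tr hankel_tr. Qed.

Lemma hankel_lead_rows r c : lead_rows (hankel r.+1 c x) = hankel r c x.
Proof. by apply/matrixP => i j; rewrite !mxE. Qed.

Lemma hankel_recurrence p p' :
  \rank (hankel p p'.+1 x) = \rank (hankel p p' x) ->
  exists D : 'rV[F]_p',
    forall i : 'I_p, x 0 (inord (i + p')) = \sum_j D 0 j * x 0 (inord (i + j)).
Proof.
rewrite rank_hankel_tr (rank_hankel_tr p) -(hankel_lead_rows p'); move=> rk_eq.
have /submxP [D rowD] := last_row_sub_lead rk_eq.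
exists D => i; have := congr1 (fun v : 'rV[F]_p => v 0 i) rowD.
rewrite hankel_lead_rows !mxE /= addnC => ->.
by apply: eq_bigr => j _; rewrite !mxE addnC.
Qed.

Definition companion p' (D : 'rV[F]_p') : 'M[F]_p' :=
  \matrix_(j, k) (if (k.+1 < p')%N then (j == k.+1 :> nat)%:R else D 0 j).

Lemma hankel_shift p p' (D : 'rV[F]_p') :
  (forall i : 'I_p, x 0 (inord (i + p')) = \sum_j D 0 j * x 0 (inord (i + j))) ->
  forall i : 'I_p.+1, (i < p)%N ->
    row i (hankel p.+1 p' x) *m companion D = row (inord i.+1) (hankel p.+1 p' x).
Proof.
move=> recD i i_lt; apply/rowP => k; rewrite !mxE inordK ?ltnS //.
have [k1_lt | k1_ge] := ltnP k.+1 p'; under eq_bigr => j _ do rewrite !mxE.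
  under eq_bigr => j _ do rewrite k1_lt.
  rewrite (bigD1 (Ordinal k1_lt)) //= eqxx mulr1 big1 ?addr0 ?addnS //.
  move=> j j_neq; case: eqP => [j_eq | _]; last by rewrite mulr0.
  by move: j_neq; rewrite -(inj_eq val_inj) /= j_eq eqxx.
under eq_bigr => j _ do rewrite ltnNge k1_ge /= mulrC.
have -> : (i.+1 + k = Ordinal i_lt + p')%N by move: (ltn_ord k); rewrite /=; lia.
by rewrite recD.
Qed.

Lemma hankel_rank_stable p p' :
  (\rank (hankel p.+1 p' x) <= p)%N ->
  \rank (hankel p p'.+1 x) = \rank (hankel p p' x) ->
  \rank (hankel p.+1 p' x) = \rank (hankel p p' x).
Proof.
move=> rkA /hankel_recurrence [D recD].
by rewrite -(hankel_lead_rows p p'); apply: shift_rank_lead (hankel_shift recD) rkA.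
Qed.

Lemma hankel_rank_add_row r c :
  (\rank (hankel r c x) <= \rank (hankel r.+1 c x) <= \rank (hankel r c x) + 1)%N.
Proof.
by rewrite -!(hankel_lead_rows r) mxrankS ?lead_rows_sub ?rank_lead_rows.
Qed.

End Hankel.

Theorem lemma8 (F : fieldType) (N p p' : nat) (x : 'rV[F]_(N.+1)) :
  (p + p' <= N.+1)%N ->
  (\rank (hankel p.+1 p' x) <= p)%N ->
  (\rank (hankel p p'.+1 x) <= p')%N ->
  \rank (hankel p.+1 p' x) = \rank (hankel p p'.+1 x).
Proof.
move=> _ rkA rkB.
have A_stable := hankel_rank_stable rkA.
have B_stable : \rank (hankel p.+1 p' x) = \rank (hankel p p' x) ->
                \rank (hankel p p'.+1 x) = \rank (hankel p p' x).
  move: rkB; rewrite (rank_hankel_tr x p p'.+1) (rank_hankel_tr x p.+1) (rank_hankel_tr x p).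
  exact: hankel_rank_stable.
have /andP [A_ge A_le] := hankel_rank_add_row x p p'.
have /andP [B_ge B_le] := hankel_rank_add_row x p' p.
rewrite (rank_hankel_tr x p') (rank_hankel_tr x p'.+1) in B_ge B_le.
lia.
Qed.
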